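(* For every even positive integer $n$, $d(L(n,2n-1)) = n^2 - n$. More precisely, there is a partial coloring of an $n\times n$ square with exactly $n^2-n$ colored entries (all off-diagonal entries colored, all diagonal entries uncolored) that uniquely extends to $L(n,2n-1)$, and no partial coloring with more than $n$ uncolored entries uniquely extends to $L(n,2n-1)$.
   Context: For positive integers $n,k$, let $\mathcal{L}_{n,k}$ be the set of $n\times n$ squares all of whose entries are colored with colors from a fixed set of $k$ colors $\{1,\dots,k\}$ such that any two entries in the same row, or in the same column, have different colors. A partial coloring of an $n\times n$ square assigns colors from $\{1,\dots,k\}$ to some of its entries; the remaining entries are called uncolored. A partial coloring extends to $L(n,k)$ if the uncolored entries can be colored so that the resulting fully colored square lies in $\mathcal{L}_{n,k}$ (keeping the given colors), and it uniquely extends to $L(n,k)$ if there is exactly one such way. A defining set of the $k$-coloring of an $n\times n$ square is the set of colored entries of a partial coloring that uniquely extends to $L(n,k)$; the defining number $d(L(n,k))$ is the minimum cardinality of such a defining set. *)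

From mathcomp Require Import all_boot.
Set Implicit Arguments.
Unset Strict Implicit.
Unset Printing Implicit Defensive.

(* Colors {1,...,k} are represented by 'I_k = {0,...,k-1}; cells are pairs
   (row, column) in 'I_n * 'I_n. *)

Definition coloring (n k : nat) := {ffun 'I_n * 'I_n -> 'I_k}.

(* A partial k-coloring: None = uncolored entry. *)
Definition pcoloring (n k : nat) := {ffun 'I_n * 'I_n -> option 'I_k}.

Definition in_L (n k : nat) (f : coloring n k) : bool :=
  [forall i : 'I_n, forall j1 : 'I_n, forall j2 : 'I_n,
     (j1 != j2) ==> (f (i, j1) != f (i, j2))] &&
  [forall j : 'I_n, forall i1 : 'I_n, forall i2 : 'I_n,
     (i1 != i2) ==> (f (i1, j) != f (i2, j))].

Definition extends_to (n k : nat) (P : pcoloring n k) (f : coloring n k) : bool :=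
  [forall c : 'I_n * 'I_n, if P c is Some a then f c == a else true].

Definition colored (n k : nat) (P : pcoloring n k) : {set 'I_n * 'I_n} :=
  [set c | P c != None].

Definition uncolored (n k : nat) (P : pcoloring n k) : {set 'I_n * 'I_n} :=
  [set c | P c == None].

Definition uniquely_extends (n k : nat) (P : pcoloring n k) : bool :=
  #|[set f : coloring n k | in_L f && extends_to P f]| == 1.

Definition defining_set (n k : nat) (S : {set 'I_n * 'I_n}) : Prop :=
  exists P : pcoloring n k, uniquely_extends P /\ colored P = S.

Definition is_defining_number (n k m : nat) : Prop :=
  (exists S : {set 'I_n * 'I_n}, defining_set k S /\ #|S| = m) /\
  (forall S : {set 'I_n * 'I_n}, defining_set k S -> m <= #|S|).

From mathcomp Require Import all_boot zify.
Set Implicit Arguments.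
Unset Strict Implicit.
Unset Printing Implicit Defensive.

(* Lower bound: if more than n entries are uncolored, two of them, a and b, lie
   in a common row.  In any completion f, if the color of b also occurs in the
   column of a, then the row and column of a carry at most 2n - 3 colors, so a
   can be given a fresh one among the 2n - 1 colors; symmetrically for b; and
   if neither happens, the colors of a and b can be exchanged.  Either way f is
   not the only completion.
   Upper bound: number the rounds of a round-robin tournament of the n teams
   (n even) by 0, ..., n - 2, and color the off-diagonal entry (i, j) by
   1 + round(i, j) above the diagonal and n + round(i, j) below it.  Then row i
   and column i together contain every nonzero color, which forces the color 0
   on every diagonal entry. *)

Lemma exists_same_fst (T U : finType) (A : {set T * U}) :
  #|T| < #|A| -> exists a b, [/\ a \in A, b \in A, a != b & a.1 == b.1].
Proof.
move=> ltTA.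
have [|noMate] := boolP [exists a in A, exists b in A, (a != b) && (a.1 == b.1)].
  by case/exists_inP=> a aA /exists_inP[b bA /andP[neq_ab eq1]]; exists a, b.
suff : #|A| <= #|T| by rewrite leqNgt ltTA.
apply: (@leq_card_in _ _ fst) => a b aA bA eq_ab; apply/eqP.
move/exists_inPn: noMate => /(_ a aA)/exists_inPn/(_ b bA).
by rewrite eq_ab eqxx andbT negbK.
Qed.

Lemma cardsU1U_le (T : finType) (x : T) (A B : {set T}) :
  A :&: B != set0 -> #|x |: (A :|: B)| <= #|A| + #|B|.
Proof.
rewrite -card_gt0 => meet_AB; rewrite cardsU1 -(cardsUI A B).
by case: (x \notin _); lia.
Qed.

Section Completions.

Variables n k : nat.
Implicit Types (f g : coloring n k) (P : pcoloring n k) (a b c d : 'I_n * 'I_n).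

Definition adjacent c d := (c != d) && ((c.1 == d.1) || (c.2 == d.2)).

Lemma adjacentC c d : adjacent c d = adjacent d c.
Proof. by rewrite /adjacent eq_sym (eq_sym c.1) (eq_sym c.2). Qed.

Lemma in_LP f : reflect (forall c d, adjacent c d -> f c != f d) (in_L f).
Proof.
apply: (iffP andP).
- case=> /forallP inRow /forallP inCol [c1 c2] [d1 d2].
  rewrite /adjacent /= => /andP[neq_cd /orP[/eqP eq1|/eqP eq2]].
  + subst d1; move/forallP: (inRow c1) => /(_ c2)/forallP/(_ d2)/implyP; apply.
    by apply: contraNneq neq_cd => ->.
  + subst d2; move/forallP: (inCol c2) => /(_ c1)/forallP/(_ d1)/implyP; apply.
    by apply: contraNneq neq_cd => ->.
- move=> adj_neq; split; apply/forallP=> i; apply/forallP=> j1; apply/forallP=> j2;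
    apply/implyP=> ne; apply: adj_neq;
    by rewrite /adjacent /= xpair_eqE eqxx ?orbT ?andbT.
Qed.

Definition row_colors f a := [set f (a.1, j) | j in [set~ a.2]].
Definition col_colors f a := [set f (i, a.2) | i in [set~ a.1]].

Lemma adjacent_colors f a d :
  adjacent a d -> f d \in row_colors f a :|: col_colors f a.
Proof.
case: a d => [a1 a2] [d1 d2]; rewrite /adjacent inE /=.
case/andP=> neq_ad /orP[/eqP eq1|/eqP eq2]; subst; apply/orP; [left|right].
- by apply/imsetP; exists d2; rewrite // !inE; apply: contraNneq neq_ad => ->.
- by apply/imsetP; exists d1; rewrite // !inE; apply: contraNneq neq_ad => ->.
Qed.

Lemma row_mate_color f a b : a != b -> a.1 == b.1 -> f b \in row_colors f a.
Proof.
case: a b => [a1 a2] [b1 b2] /= neq_ab /eqP eq1; subst b1.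
by apply/imsetP; exists b2; rewrite // !inE; apply: contraNneq neq_ab => ->.
Qed.

Definition set_cell f a z : coloring n k := [ffun c => if c == a then z else f c].

Lemma set_cell_in_L f a z :
  in_L f -> z \notin row_colors f a :|: col_colors f a -> in_L (set_cell f a z).
Proof.
move=> /in_LP fL z_fresh; apply/in_LP => c d adj_cd; rewrite !ffunE.
have z_neq d' : adjacent a d' -> z != f d'.
  by move=> /(adjacent_colors f); apply: contraTneq => <-.
have [eq_ca|_] := eqVneq c a; have [eq_da|_] := eqVneq d a.
- by rewrite /adjacent eq_ca eq_da eqxx in adj_cd.
- by rewrite z_neq // -eq_ca.
- by rewrite eq_sym z_neq // -eq_da adjacentC.
- exact: fL.
Qed.

Lemma fresh_color f a :
  2 * n - 1 <= k -> row_colors f a :&: col_colors f a != set0 ->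
  exists z, z \notin f a |: (row_colors f a :|: col_colors f a).
Proof.
move=> le_k /(cardsU1U_le (f a)).
set R := row_colors f a; set C := col_colors f a => le_RC.
suff : 0 < #|~: (f a |: (R :|: C))|.
  by rewrite card_gt0 => /set0Pn[z]; rewrite inE; exists z.
have rowN : #|R| <= n.-1 by rewrite -(card_ord n) -(cardsC1 a.2) leq_imset_card.
have colN : #|C| <= n.-1 by rewrite -(card_ord n) -(cardsC1 a.1) leq_imset_card.
have n_gt0 : 0 < n := leq_ltn_trans (leq0n a.1) (ltn_ord a.1).
have := cardsC (f a |: (R :|: C)); rewrite card_ord; lia.
Qed.

Lemma recolor_cell f a :
  2 * n - 1 <= k -> in_L f -> row_colors f a :&: col_colors f a != set0 ->
  exists g, [/\ in_L g, g != f & forall c, c != a -> g c = f c].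
Proof.
move=> le_k fL /(fresh_color le_k)[z]; rewrite in_setU1 negb_or => /andP[z_new z_fresh].
exists (set_cell f a z); split; first exact: set_cell_in_L.
- apply: contra z_new => /eqP/ffunP/(_ a); rewrite ffunE eqxx => ->; exact: eqxx.
- by move=> c /negbTE c_a; rewrite ffunE c_a.
Qed.

Definition swap_cells f a b : coloring n k :=
  [ffun c => if c == a then f b else if c == b then f a else f c].

Lemma row_mate_color_free f a b d :
  in_L f -> a.1 == b.1 -> f b \notin col_colors f a ->
  adjacent a d -> d != b -> f d != f b.
Proof.
move=> /in_LP fL eq1 b_free /andP[neq_ad /orP[/eqP eq_row|eq_col]] neq_db.
  by apply: fL; rewrite /adjacent neq_db -eq_row (eqP eq1) eqxx.
apply: contraNneq b_free => <-; apply/imsetP; exists d.1.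
  rewrite !inE; apply: contraNneq neq_ad => eq_row.
  by rewrite [a]surjective_pairing [d]surjective_pairing xpair_eqE eq_row eq_col eqxx.
by rewrite (eqP eq_col) -surjective_pairing.
Qed.

Lemma swap_cells_in_L f a b :
  in_L f -> a != b -> a.1 == b.1 ->
  f b \notin col_colors f a -> f a \notin col_colors f b -> in_L (swap_cells f a b).
Proof.
move=> fL neq_ab eq1 b_free a_free; have /in_LP fL' := fL.
have adj_ab : adjacent a b by rewrite /adjacent neq_ab eq1.
have adj_ba : adjacent b a by rewrite adjacentC.
have free_a := row_mate_color_free fL eq1 b_free.
have free_b := row_mate_color_free fL (etrans (eq_sym _ _) eq1) a_free.
apply/in_LP => c d adj_cd; rewrite !ffunE.
have [eq_ca|c_a] := eqVneq c a; have [eq_da|d_a] := eqVneq d a.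
- by rewrite /adjacent eq_ca eq_da eqxx in adj_cd.
- have [_|d_b] := eqVneq d b; first exact: fL'.
  by rewrite eq_sym free_a // -eq_ca.
- have [_|c_b] := eqVneq c b; first exact: fL'.
  by rewrite free_a // -eq_da adjacentC.
- have [eq_cb|c_b] := eqVneq c b; have [eq_db|d_b] := eqVneq d b.
  + by rewrite /adjacent eq_cb eq_db eqxx in adj_cd.
  + by rewrite eq_sym free_b // -eq_cb.
  + by rewrite free_b // -eq_db adjacentC.
  + exact: fL'.
Qed.

Lemma exists_other_completion f a b :
  2 * n - 1 <= k -> in_L f -> a != b -> a.1 == b.1 ->
  exists g, [/\ in_L g, g != f & forall c, c != a -> c != b -> g c = f c].
Proof.
move=> le_k fL neq_ab eq1.
have neq_ba : b != a by rewrite eq_sym.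
have eq1' : b.1 == a.1 by rewrite eq_sym.
have [b_col|b_free] := boolP (f b \in col_colors f a).
  have [|g [gL g_f g_eq]] := recolor_cell (a := a) le_k fL.
    by apply/set0Pn; exists (f b); rewrite inE row_mate_color.
  by exists g; split=> // c /g_eq.
have [a_col|a_free] := boolP (f a \in col_colors f b).
  have [|g [gL g_f g_eq]] := recolor_cell (a := b) le_k fL.
    by apply/set0Pn; exists (f a); rewrite inE row_mate_color.
  by exists g; split=> // c _ /g_eq.
exists (swap_cells f a b); split; first exact: swap_cells_in_L.
- apply/eqP => /ffunP/(_ a); rewrite ffunE eqxx; apply/eqP.
  by move/in_LP: fL; apply; rewrite /adjacent neq_ba eq1'.
- by move=> c /negbTE c_a /negbTE c_b; rewrite ffunE c_a c_b.
Qed.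

Lemma extends_to_agree P f g :
  extends_to P f -> (forall c, c \in colored P -> g c = f c) -> extends_to P g.
Proof.
move=> /forallP fP eq_fg; apply/forallP => c; move: (fP c).
by case Pc: (P c) => [x|] //; rewrite eq_fg // inE Pc.
Qed.

Lemma coloredE P : colored P = ~: uncolored P.
Proof. by apply/setP => c; rewrite !inE. Qed.

Lemma uniquely_extendsP P :
  uniquely_extends P ->
  exists2 f, in_L f && extends_to P f &
    forall g, in_L g -> extends_to P g -> g = f.
Proof.
case/cards1P=> f completions_f.
have completionE g : (in_L g && extends_to P g) = (g == f).
  by rewrite -in_set1 -completions_f inE.
exists f; first by rewrite completionE.
by move=> g gL gP; apply/eqP; rewrite -completionE gL gP.
Qed.

Theorem uncolored_gt_not_uniquely_extends P :
  2 * n - 1 <= k -> n < #|uncolored P| -> ~~ uniquely_extends P.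
Proof.
move=> le_k; rewrite -[n in n < _]card_ord => /exists_same_fst[a [b [aU bU neq_ab eq1]]].
apply/negP => /uniquely_extendsP[f /andP[fL fP] f_unique].
have [g [gL g_f g_eq]] := exists_other_completion le_k fL neq_ab eq1.
suff gP : extends_to P g by rewrite (f_unique g gL gP) eqxx in g_f.
apply: (extends_to_agree fP) => c cP; apply: g_eq.
- by apply: contraTneq cP => ->; rewrite coloredE in_setC negbK.
- by apply: contraTneq cP => ->; rewrite coloredE in_setC negbK.
Qed.

End Completions.

Lemma double_mod_inj m a b :
  odd m -> a < m -> b < m -> 2 * a = 2 * b %[mod m] -> a = b.
Proof.
move=> m_odd.
wlog le_ab : a b / a <= b.
  by move=> W a_lt b_lt eq_ab; case: (leqP a b) => [|/ltnW] le; [|symmetry]; apply: W.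
move=> a_lt b_lt eq_ab.
have : 2 * b == 2 * a %[mod m] by rewrite eq_ab.
rewrite eqn_mod_dvd ?leq_mul2l ?le_ab // -mulnBr Gauss_dvdr ?coprimen2 // => m_dvd.
have [|gt0] := posnP (b - a); first by lia.
by have := dvdn_leq gt0 m_dvd; lia.
Qed.

Section RoundRobin.

Variable n : nat.
Hypothesis n_gt1 : 1 < n.

(* The circle method: teams 0, ..., n - 2 sit on a regular polygon and team
   n - 1 at its centre; in round r, i and j meet when i + j = r (mod n - 1),
   and the centre meets the i with 2 i = r (mod n - 1). *)
Definition round (i j : nat) : nat :=
  if i == n.-1 then (2 * j) %% n.-1
  else if j == n.-1 then (2 * i) %% n.-1 else (i + j) %% n.-1.

Lemma roundC i j : round i j = round j i.
Proof.
rewrite /round; have [i_c|_] := eqVneq i n.-1; have [j_c|_] := eqVneq j n.-1 => //.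
- by rewrite i_c j_c.
- by rewrite addnC.
Qed.

Lemma round_lt i j : round i j < n.-1.
Proof.
have m_gt0 : 0 < n.-1 by rewrite -ltnS prednK // ltnW.
by rewrite /round; case: ifP => _; [|case: ifP => _]; rewrite ltn_pmod.
Qed.

Definition tour_color (i j : nat) : nat :=
  if i < j then (round i j).+1 else if j < i then round i j + n else 0.

Lemma tour_color_lt i j : tour_color i j < 2 * n - 1.
Proof. by have := round_lt i j; rewrite /tour_color; case: (ltngtP i j); lia. Qed.

Definition tour_coloring : coloring n (2 * n - 1) :=
  [ffun c : 'I_n * 'I_n => Ordinal (tour_color_lt c.1 c.2)].

Definition offdiag_pcoloring : pcoloring n (2 * n - 1) :=
  [ffun c => if c.1 == c.2 then None else Some (tour_coloring c)].

Lemma colored_offdiag_pcoloring :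
  colored offdiag_pcoloring = [set c | c.1 != c.2].
Proof. by apply/setP => c; rewrite !inE ffunE; case: ifP. Qed.

Hypothesis n_even : ~~ odd n.

Lemma round_inj i j1 j2 : i < n -> j1 < n -> j2 < n -> j1 != i -> j2 != i ->
  round i j1 = round i j2 -> j1 = j2.
Proof.
move=> i_lt j1_lt j2_lt j1_i j2_i.
have m_odd : odd n.-1 by case: n n_gt1 n_even => // n' _ /=; rewrite negbK.
rewrite /round; case: eqP => [i_c|i_c]; first by apply: double_mod_inj; lia.
case: eqP => [j1_c|j1_c]; case: eqP => [j2_c|j2_c].
- by rewrite j1_c j2_c.
- move/eqP; rewrite mul2n -addnn eqn_modDl => /eqP; rewrite !modn_small; lia.
- move/eqP; rewrite mul2n -addnn eqn_modDl => /eqP; rewrite !modn_small; lia.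
- move/eqP; rewrite eqn_modDl => /eqP; rewrite !modn_small; lia.
Qed.

Lemma round_surj i r : i < n -> r < n.-1 -> exists j, [/\ j < n, j != i & round i j = r].
Proof.
move=> i_lt r_lt; pose i0 : 'I_n := Ordinal i_lt.
have lift_neq j : lift i0 j != i :> nat by rewrite eq_sym (neq_lift i0 j).
pose opponent (j : 'I_n.-1) : 'I_n.-1 := Ordinal (round_lt i (lift i0 j)).
have /injF_bij[opponent_inv _ opponentK] : injective opponent.
  move=> j1 j2 /(congr1 val) /= eq_round; apply: (@lift_inj _ i0); apply: val_inj.
  exact: round_inj i_lt (ltn_ord _) (ltn_ord _) (lift_neq j1) (lift_neq j2) eq_round.
exists (lift i0 (opponent_inv (Ordinal r_lt))); split => //.
exact: (congr1 val (opponentK (Ordinal r_lt))).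
Qed.

Lemma tour_color_row_inj i j1 j2 : i < n -> j1 < n -> j2 < n ->
  tour_color i j1 = tour_color i j2 -> j1 = j2.
Proof.
move=> i_lt j1_lt j2_lt; rewrite /tour_color.
have := round_lt i j1; have := round_lt i j2.
by case: (ltngtP i j1) => c1; case: (ltngtP i j2) => c2 ? ? eq_c; try lia;
  apply: (round_inj i_lt) => //; lia.
Qed.

Lemma tour_color_col_inj i1 i2 j : i1 < n -> i2 < n -> j < n ->
  tour_color i1 j = tour_color i2 j -> i1 = i2.
Proof.
move=> i1_lt i2_lt j_lt; rewrite /tour_color (roundC i1) (roundC i2).
have := round_lt j i1; have := round_lt j i2.
by case: (ltngtP i1 j) => c1; case: (ltngtP i2 j) => c2 ? ? eq_c; try lia;
  apply: (round_inj j_lt) => //; lia.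
Qed.

Lemma tour_color_cover i v : i < n -> 0 < v < 2 * n - 1 ->
  exists j, [/\ j < n, j != i & (tour_color i j = v \/ tour_color j i = v)].
Proof.
move=> i_lt v_bd; rewrite /tour_color.
have [le_v|lt_v] := leqP v n.-1.
- have [|j [j_lt j_i round_j]] := @round_surj i v.-1 i_lt; first by lia.
  exists j; split => //; rewrite (roundC j) round_j.
  by case: (ltngtP i j) => c; [left|right|]; lia.
- have [|j [j_lt j_i round_j]] := @round_surj i (v - n) i_lt; first by lia.
  exists j; split => //; rewrite (roundC j) round_j.
  by case: (ltngtP i j) => c; [right|left|]; lia.
Qed.

Lemma tour_coloring_in_L : in_L tour_coloring.
Proof.
apply/in_LP => [[c1 c2] [d1 d2]]; rewrite /adjacent /=.
case/andP=> neq_cd /orP[/eqP eq1|/eqP eq2]; subst;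
  apply: contraNneq neq_cd; rewrite !ffunE => /(congr1 val) /= eq_c.
- by have /val_inj -> := tour_color_row_inj (ltn_ord d1) (ltn_ord c2) (ltn_ord d2) eq_c.
- by have /val_inj -> := tour_color_col_inj (ltn_ord c1) (ltn_ord d1) (ltn_ord d2) eq_c.
Qed.

Lemma offdiag_completion_diag g i :
  in_L g -> extends_to offdiag_pcoloring g -> g (i, i) = 0 :> nat.
Proof.
move=> /in_LP gL /forallP gP.
have g_offdiag c : c.1 != c.2 -> g c = tour_coloring c.
  by move=> c_off; move: (gP c); rewrite ffunE (negbTE c_off) => /eqP.
apply/eqP; rewrite eqn0Ngt; apply/negP => gi_gt0.
have [|j [j_lt j_i seen]] := tour_color_cover (ltn_ord i) (v := g (i, i)).
  by rewrite gi_gt0 ltn_ord.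
pose j0 : 'I_n := Ordinal j_lt; have i_j0 : i != j0 by rewrite -val_eqE /= eq_sym.
case: seen => seen.
- have := gL (i, i) (i, j0).
  rewrite /adjacent /= xpair_eqE eqxx i_j0 (g_offdiag (i, j0)) //.
  by move/(_ isT); rewrite -val_eqE ffunE /= seen eqxx.
- have := gL (i, i) (j0, i).
  rewrite /adjacent /= xpair_eqE eqxx andbT i_j0 orbT (g_offdiag (j0, i)) 1?eq_sym //.
  by move/(_ isT); rewrite -val_eqE ffunE /= /j0 /= seen eqxx.
Qed.

Lemma offdiag_pcoloring_unique : uniquely_extends offdiag_pcoloring.
Proof.
apply/cards1P; exists tour_coloring; apply/setP => g; rewrite !inE.
apply/andP/eqP => [[gL gP]|->]; last first.
  by split; [exact: tour_coloring_in_L | apply/forallP => c; rewrite ffunE; case: ifP].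
apply/ffunP => -[i j]; have [<-|j_i] := eqVneq i j.
  by apply: val_inj; rewrite /= offdiag_completion_diag // ffunE /= /tour_color ltnn.
by move/forallP: gP => /(_ (i, j)); rewrite !ffunE /= (negbTE j_i) => /eqP.
Qed.

End RoundRobin.

Lemma card_offdiag n : #|[set c : 'I_n * 'I_n | c.1 != c.2]| = n ^ 2 - n.
Proof.
have -> : [set c : 'I_n * 'I_n | c.1 != c.2] = ~: [set (i, i) | i : 'I_n].
  apply/setP => -[i j]; rewrite !inE /=; apply/idP/idP.
  - by apply: contraNN => /imsetP[l _ [-> ->]].
  - by apply: contraNN => /eqP ->; apply/imsetP; exists j.
have := cardsC [set (i, i) | i : 'I_n].
rewrite card_imset ?card_prod ?card_ord => [|i j []//].
by rewrite -mulnn => <-; rewrite addKn.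
Qed.

Theorem mainTheorem4 (n : nat) (Hn : 0 < n) (Heven : ~~ odd n) :
  is_defining_number n (2 * n - 1) (n ^ 2 - n) /\
  (exists P : pcoloring n (2 * n - 1),
     colored P = [set c : 'I_n * 'I_n | c.1 != c.2] /\ uniquely_extends P) /\
  (forall P : pcoloring n (2 * n - 1),
     n < #|uncolored P| -> ~~ uniquely_extends P).
Proof.
have n_gt1 : 1 < n by case: n Hn Heven => [|[|]].
have offdiag_unique := offdiag_pcoloring_unique n_gt1 Heven.
have offdiag_colored := colored_offdiag_pcoloring n_gt1.
have many_uncolored P := @uncolored_gt_not_uniquely_extends n _ P (leqnn _).
split; [split|split] => //.
- exists (colored (offdiag_pcoloring n_gt1)); rewrite offdiag_colored card_offdiag.
  by split=> //; exists (offdiag_pcoloring n_gt1).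
- move=> S [P [P_unique <-]].
  have : #|uncolored P| <= n by rewrite leqNgt; apply: contraL P_unique => /many_uncolored.
  have := cardsC (uncolored P); rewrite -coloredE card_prod card_ord; lia.
- by exists (offdiag_pcoloring n_gt1).
Qed.
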